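(* Let $I:(0,1)\to(0,1)$ be an increasing bijection satisfying $I(2t)\approx I(t)$ for $t\in(0,\frac12)$, and let $S$ be a sublinear operator defined on $m_I$ (with values in measurable functions on $(0,1)$). If $S$ is bounded on $L^\infty$ and on $m_I$, then $$(Sf)^*(t)\lesssim (S_If)(t),\quad t\in(0,1),$$ for every nonnegative $f\in m_I$. If, in addition, $\int_0^t\frac{ds}{I(s)}\lesssim\frac{t}{I(t)}$ for $t\in(0,1)$, then $$(Sf)^{**}(t)\lesssim(S_If)(t)\quad\text{and}\quad (S_If)^{**}(t)\lesssim(S_If)(t),\quad t\in(0,1),$$ for every nonnegative $f\in m_I$. In particular, for an r.i. space $X\subset m_I$ we have $X\in\mathrm{Int}(L^\infty,m_I)$ whenever $S_I$ is bounded on $X$.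
   Context: $f^*$ is the nonincreasing rearrangement on $(0,1)$, $f^{**}(t)=\frac1t\int_0^tf^*$. $\|f\|_{m_I}=\sup_{0<t<1}I(t)f^*(t)$, $m_I$ the functions with finite quasinorm. $S_If(t)=\frac1{I(t)}\sup_{0<s\le t}I(s)f^*(s)$ (which is $\equiv\infty$ if $f\notin m_I$). An operator is bounded on a (quasi-)normed space $X$ if $\|Tf\|_X\lesssim\|f\|_X$. An r.i. space is a rearrangement-invariant Banach function space on $(0,1)$. $X\in\mathrm{Int}(L^\infty,m_I)$ means $L^\infty\subset X\subset m_I$ and every linear operator bounded on both $L^\infty$ and $m_I$ is bounded on $X$. $\lesssim$, $\approx$ denote inequalities up to constants independent of $f$ and $t$. *)

From mathcomp Require Import all_boot all_order all_algebra.
From mathcomp Require Import all_classical all_reals all_analysis.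
Import Order.TTheory GRing.Theory Num.Theory.
Import numFieldNormedType.Exports.

Set Implicit Arguments.
Unset Strict Implicit.
Unset Printing Implicit Defensive.

Local Open Scope classical_set_scope.
Local Open Scope ring_scope.

Section RearrDefs.
Variable R : realType.

Definition U01 : set R := `]0, 1[%classic.
Definition leb := (@lebesgue_measure R).
Definition Ioo0 (t : R) : set R := `]0, t[%classic.
Definition Ioc0 (t : R) : set R := `]0, t]%classic.

Definition edistrib (f : R -> \bar R) (l : R) : \bar R :=
  leb (U01 `&` [set x | (l%:E < `|f x|)%E]).

Definition erearr (f : R -> \bar R) (t : R) : \bar R :=
  ereal_inf (EFin @` [set l : R | 0 <= l /\ (edistrib f l <= t%:E)%E]).

Definition rearr (f : R -> R) (t : R) : \bar R := erearr (EFin \o f) t.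

Definition erearr2 (f : R -> \bar R) (t : R) : \bar R :=
  ((t^-1)%:E * \int[leb]_(s in Ioo0 t) erearr f s)%E.

Definition rearr2 (f : R -> R) (t : R) : \bar R := erearr2 (EFin \o f) t.

(* L^infty on (0,1): ||f||_oo = f^*(0) = ess sup |f| *)
Definition Linf_norm (f : R -> R) : \bar R := rearr f 0.
Definition in_Linf (f : R -> R) : Prop :=
  measurable_fun U01 f /\ (Linf_norm f < +oo)%E.

Definition mI_norm (I : R -> R) (f : R -> R) : \bar R :=
  ereal_sup [set ((I t)%:E * rearr f t)%E | t in U01].
Definition in_mI (I : R -> R) (f : R -> R) : Prop :=
  measurable_fun U01 f /\ (mI_norm I f < +oo)%E.

Definition SI (I : R -> R) (f : R -> R) (t : R) : \bar R :=
  (((I t)^-1)%:E * ereal_sup [set ((I s)%:E * rearr f s)%E | s in Ioc0 t])%E.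

Definition sublinear_on_mI (I : R -> R) (S : (R -> R) -> (R -> R)) : Prop :=
  (forall f, in_mI I f -> measurable_fun U01 (S f)) /\
  (forall f g, in_mI I f -> in_mI I g ->
     {ae leb, forall x, U01 x -> `|S (fun y => f y + g y) x| <= `|S f x| + `|S g x| }) /\
  (forall (a : R) f, in_mI I f ->
     {ae leb, forall x, U01 x -> `|S (fun y => a * f y) x| = `|a| * `|S f x| }).

Definition linear_on_mI (I : R -> R) (T : (R -> R) -> (R -> R)) : Prop :=
  (forall f, in_mI I f -> measurable_fun U01 (T f)) /\
  (forall (a b : R) f g, in_mI I f -> in_mI I g ->
     {ae leb, forall x, U01 x ->
        T (fun y => a * f y + b * g y) x = a * T f x + b * T g x }).

Definition bounded_Linf (T : (R -> R) -> (R -> R)) : Prop :=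
  exists C : R, 0 < C /\ forall f, in_Linf f ->
    in_Linf (T f) /\ (Linf_norm (T f) <= C%:E * Linf_norm f)%E.

Definition bounded_mI (I : R -> R) (T : (R -> R) -> (R -> R)) : Prop :=
  exists C : R, 0 < C /\ forall f, in_mI I f ->
    in_mI I (T f) /\ (mI_norm I (T f) <= C%:E * mI_norm I f)%E.

Definition nonneg01 (f : R -> R) : Prop := forall x, U01 x -> 0 <= f x.

(* rearrangement-invariant Banach function space on (0,1) (Luxemburg axioms);
   rho is the function norm acting on nonnegative measurable functions *)
Record ri_space := RIspace {
  rho : (R -> R) -> \bar R;
  rho_ge0 : forall f, (0 <= rho f)%E;
  rho_eq0 : forall f : R -> R, measurable_fun U01 f -> nonneg01 f ->
     (rho f = 0%E <-> {ae leb, forall x, U01 x -> f x = 0});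
  rhoZ : forall (a : R) (f : R -> R), 0 <= a -> measurable_fun U01 f -> nonneg01 f ->
     rho (fun x => a * f x) = (a%:E * rho f)%E;
  rhoD : forall f g : R -> R, measurable_fun U01 f -> nonneg01 f ->
     measurable_fun U01 g -> nonneg01 g ->
     (rho (fun x => (f x + g x)%R) <= rho f + rho g)%E;
  rho_mono : forall f g : R -> R, measurable_fun U01 f -> nonneg01 f ->
     measurable_fun U01 g -> nonneg01 g ->
     {ae leb, forall x, U01 x -> g x <= f x} -> (rho g <= rho f)%E;
  rho_fatou : forall (fn : nat -> R -> R) (f : R -> R),
     (forall n, measurable_fun U01 (fn n)) -> (forall n, nonneg01 (fn n)) ->
     measurable_fun U01 f ->
     (forall x, U01 x -> forall n m, (n <= m)%N -> fn n x <= fn m x) ->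
     (forall x, U01 x -> (fun n => fn n x) @ \oo --> f x) ->
     rho f = ereal_sup (range (fun n => rho (fn n)));
  rho_indic : forall E : set R, measurable E -> E `<=` U01 ->
     (rho (\1_E) < +oo)%E;
  rho_int : forall E : set R, measurable E -> E `<=` U01 ->
     exists C : R, forall f : R -> R, measurable_fun U01 f -> nonneg01 f ->
       (\int[leb]_(x in E) (f x)%:E <= C%:E * rho f)%E;
  rho_ri : forall f g : R -> R, measurable_fun U01 f -> nonneg01 f ->
     measurable_fun U01 g -> nonneg01 g ->
     (forall t, rearr f t = rearr g t) -> rho f = rho g
}.

Definition normX (X : ri_space) (f : R -> R) : \bar R :=
  rho X (fun x => `|f x|).
Definition in_X (X : ri_space) (f : R -> R) : Prop :=
  measurable_fun U01 f /\ (normX X f < +oo)%E.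

Definition bounded_X (X : ri_space) (T : (R -> R) -> (R -> R)) : Prop :=
  exists C : R, 0 < C /\ forall f, in_X X f ->
    in_X X (T f) /\ (normX X (T f) <= C%:E * normX X f)%E.

(* S_I (made real-valued; it is finite on (0,1) for f in m_I) bounded on X *)
Definition SI_bounded_X (I : R -> R) (X : ri_space) : Prop :=
  exists C : R, 0 < C /\ forall f, in_X X f ->
    in_X X (fun t => fine (SI I f t)) /\
    (normX X (fun t => fine (SI I f t)) <= C%:E * normX X f)%E.

Definition Int_Linf_mI (I : R -> R) (X : ri_space) : Prop :=
  (forall f, in_Linf f -> in_X X f) /\
  (forall f, in_X X f -> in_mI I f) /\
  (forall T, linear_on_mI I T -> bounded_Linf T -> bounded_mI I T ->
     bounded_X X T).

Definition incr_bij01 (I : R -> R) : Prop :=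
  (forall t, U01 t -> U01 (I t)) /\
  (forall s t, U01 s -> U01 t -> s < t -> I s < I t) /\
  (forall y, U01 y -> exists2 t, U01 t & I t = y).

Definition doubling (I : R -> R) : Prop :=
  exists c C : R, 0 < c /\ 0 < C /\
    forall t, 0 < t -> t < 2^-1 -> c * I t <= I (2 * t) /\ I (2 * t) <= C * I t.

Definition int_cond (I : R -> R) : Prop :=
  exists C : R, 0 < C /\ forall t, U01 t ->
    (\int[leb]_(s in Ioo0 t) ((I s)^-1)%:E <= (C * t / I t)%:E)%E.

End RearrDefs.

(* Write M(t) = sup_{0<s<=t} I(s) f^*(s), so that S_I f(t) = M(t)/I(t).
   Cutting f at the height f^*(t) splits it into a part bounded by f^*(t) and a
   remainder that vanishes outside a set of measure at most t (the distribution
   function is right continuous); the rearrangement of the remainder is thus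
   dominated by f^* on (0,t] and zero afterwards, so its m_I quasinorm is at most
   M(t). Sublinearity and the two boundedness assumptions then give
   (Sf)^*(t) <= C1 f^*(t) + C2 M(t)/I(t) <= C S_I f(t).
   For s < t this yields (Sf)^*(s) <= C M(t)/I(s), and integrating over (0,t)
   with the integral condition bounds (Sf)^**(t). The same works for S_I f
   itself, since S_I f(r) <= S_I f(t) + M(t)/I(r) for every r. Finally a linear
   operator T bounded on L^oo and m_I satisfies (Tf)^* <= C S_I f, and as the
   norm of X only depends on rearrangements, boundedness of S_I on X passes to T. *)

From mathcomp Require Import all_boot all_order all_algebra.
From mathcomp Require Import all_classical all_reals all_analysis.
From mathcomp Require Import ring lra measurable_realfun.
Import Order.TTheory GRing.Theory Num.Theory.
Import numFieldNormedType.Exports.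
Local Open Scope classical_set_scope.
Local Open Scope ring_scope.

Section Clamp.
Context {R : realFieldType}.

Definition clamp (c x : R) : R := Num.max (- c) (Num.min x c).

Lemma normr_clamp_le c x : 0 <= c -> `|clamp c x| <= c.
Proof.
move=> c0; rewrite /clamp ler_norml.
have [xc|xc] := leP x c; [have [cx|cx] := leP (- c) x | have [cx|cx] := leP (- c) c];
  by apply/andP; split; lra.
Qed.

Lemma normr_sub_clamp_le c x : 0 <= c -> `|x - clamp c x| <= `|x|.
Proof.
move=> c0; rewrite /clamp.
have [xc|xc] := leP x c; [have [cx|cx] := leP (- c) x | have [cx|cx] := leP (- c) c];
  have [x0|x0] := leP 0 x; rewrite ?(ger0_norm x0) ?(ltr0_norm x0) ler_norml;
  by apply/andP; split; lra.
Qed.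

Lemma sub_clamp_eq0 c x : `|x| <= c -> x - clamp c x = 0.
Proof.
rewrite /clamp ler_norml => /andP[cx xc].
by rewrite (min_l xc) (max_r cx) subrr.
Qed.

End Clamp.

Section Rearrangement.
Context {R : realType}.
Implicit Types (g h : R -> \bar R) (f : R -> R).
Local Notation U01 := (@U01 R).
Local Notation leb := (@leb R).

Lemma U01P (t : R) : U01 t <-> 0 < t < 1.
Proof. by rewrite /U01 /= in_itv. Qed.

Lemma Ioo0_U01 {s t : R} : t <= 1 -> Ioo0 t s -> U01 s.
Proof.
move=> t1; rewrite /Ioo0 /= in_itv /= => /andP[s0 st].
by apply/U01P; rewrite s0 (lt_le_trans st).
Qed.

Lemma measurable_U01 : measurable U01.
Proof. exact: measurable_itv. Qed.

Lemma measurable_Ioo0 (t : R) : measurable (Ioo0 t).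
Proof. exact: measurable_itv. Qed.

Local Open Scope ereal_scope.

Lemma leb_ge0 (A : set R) : 0 <= leb A.
Proof. exact: outer_measure_ge0. Qed.

Lemma le_leb (A B : set R) : A `<=` B -> leb A <= leb B.
Proof. exact: (le_outer_measure (lebesgue_measure : set R -> _)). Qed.

Lemma lebU2 (A B : set R) : leb (A `|` B) <= leb A + leb B.
Proof. exact: outer_measureU2. Qed.

Lemma leb_Ioo0 (t : R) : (0 <= t)%R -> leb (Ioo0 t) = t%:E.
Proof.
rewrite le_eqVlt => /orP[/eqP <-|t0]; rewrite /leb /Ioo0 lebesgue_measure_itv /=.
  by rewrite ltxx.
by rewrite lte_fin t0 sube0.
Qed.

Lemma measurable_normr_gt f (l : R) : measurable_fun U01 f ->
  measurable (U01 `&` [set x | l%:E < `|(f x)%:E|]).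
Proof.
move=> mf; have mnf : measurable_fun U01 (fun x => `|f x|%R).
  by apply: measurableT_comp => //; exact: normr_measurable.
rewrite [X in measurable X](_ : _ = U01 `&` (fun x => `|f x|%R) @^-1` `]l, +oo[%classic).
  exact: mnf measurable_U01 _ (measurable_itv _).
by apply/seteqP; split => x /= [Ux]; rewrite in_itv /= andbT lte_fin.
Qed.

Lemma edistrib_le1 g l : edistrib g l <= 1%:E.
Proof. by rewrite -(@leb_Ioo0 1 ler01); apply: le_leb => x []. Qed.

Lemma edistrib_nonincreasing g {l m : R} : (l <= m)%R -> edistrib g m <= edistrib g l.
Proof.
move=> lm; apply: le_leb => x [Ux /= gx]; split => //.
by apply: le_lt_trans gx; rewrite lee_fin.
Qed.

Lemma edistrib_rcont_le f (l s : R) : measurable_fun U01 f ->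
  (forall e : R, (0 < e)%R -> edistrib (EFin \o f) (l + e) <= s%:E) ->
  edistrib (EFin \o f) l <= s%:E.
Proof.
move=> mf le_s.
pose F n := U01 `&` [set x | (l + n.+1%:R^-1)%:E < `|(f x)%:E|].
have FE : \bigcup_n F n = U01 `&` [set x | l%:E < `|(f x)%:E|].
  apply/seteqP; split => x.
    by move=> [n _ [Ux /= h]]; split => //; apply: le_lt_trans h; rewrite lee_fin lerDl.
  move=> [Ux /=]; rewrite lte_fin => /ltr_add_invr[k hk].
  by exists k => //; split => //=; rewrite lte_fin.
have Fnd : nondecreasing_seq F.
  move=> n m nm; apply/subsetPset => x [Ux /= h]; split => //; apply: le_lt_trans h.
  by rewrite lee_fin lerD2l lef_pV2 ?posrE ?ltr0n // ler_nat ltnS.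
have mF n : measurable (F n) by exact: measurable_normr_gt.
have mUF : measurable (\bigcup_n F n) by rewrite FE; exact: measurable_normr_gt.
rewrite /edistrib /leb -FE.
have := nondecreasing_cvg_mu (mu := @lebesgue_measure R) mF mUF Fnd.
by move/cvge_to_le; apply; apply: nearW => n; exact: le_s.
Qed.

Lemma erearr_ge0 g t : 0 <= erearr g t.
Proof. by apply: le_ereal_inf_tmp => _ [l [l0 _] <-]; rewrite lee_fin. Qed.

Lemma erearr_le g (l t : R) : (0 <= l)%R -> edistrib g l <= t%:E -> erearr g t <= l%:E.
Proof. by move=> l0 gl; apply: ereal_inf_lbound; exists l. Qed.

Lemma erearr_nonincreasing g {s u : R} : (s <= u)%R -> erearr g u <= erearr g s.
Proof.
move=> su; apply: le_ereal_inf_tmp => _ [l [l0 hl] <-].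
by apply: erearr_le l0 _; apply: le_trans hl _; rewrite lee_fin.
Qed.

Lemma edistrib_rearr_le f t : measurable_fun U01 f -> rearr f t \is a fin_num ->
  edistrib (EFin \o f) (fine (rearr f t)) <= t%:E.
Proof.
move=> mf ft; apply: edistrib_rcont_le => // e e0.
have : erearr (EFin \o f) t < (fine (rearr f t) + e)%:E.
  by rewrite -[X in X < _](fineK ft) lte_fin ltrDl.
case/ereal_inf_lt => _ [l [_ hl] <-]; rewrite lte_fin => /ltW lt.
exact: le_trans (edistrib_nonincreasing _ lt) hl.
Qed.

Lemma erearr_le_edistrib g h (K t : R) : (0 <= K)%R ->
  (forall l : R, (0 <= l)%R -> edistrib g (l + K) <= edistrib h l) ->
  erearr g t <= K%:E + erearr h t.
Proof.
move=> K0 gh; rewrite addeC -leeBlDr //.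
apply: le_ereal_inf_tmp => _ [l [l0 hl] <-].
rewrite leeBlDr // -EFinD; apply: erearr_le; first exact: addr_ge0.
exact: le_trans (gh _ l0) hl.
Qed.

Lemma edistrib_le_ae g h (K l : R) :
  {ae leb, forall x, U01 x -> `|g x| <= K%:E + `|h x|} ->
  edistrib g (l + K) <= edistrib h l.
Proof.
move=> [N [_ N0 gN]]; apply: le_trans (_ : leb ((U01 `&` [set x | l%:E < `|h x|]) `|` N) <= _).
  apply: le_leb => x [Ux /= gx]; have [gh|?] := pselect (U01 x -> `|g x| <= K%:E + `|h x|).
    left; split => //=; have := lt_le_trans gx (gh Ux).
    by rewrite EFinD addeC lteD2lE.
  by right; exact: gN.
by apply: le_trans (lebU2 _ _) _; rewrite N0 adde0.
Qed.

Lemma erearr_le_ae g h (K t : R) : (0 <= K)%R ->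
  {ae leb, forall x, U01 x -> `|g x| <= K%:E + `|h x|} ->
  erearr g t <= K%:E + erearr h t.
Proof. by move=> K0 gh; apply: erearr_le_edistrib => // l _; exact: edistrib_le_ae. Qed.

Lemma erearr_eq_edistrib g h t :
  (forall l : R, (0 <= l)%R -> edistrib g l = edistrib h l) -> erearr g t = erearr h t.
Proof.
move=> gh; rewrite /erearr; congr (ereal_inf (_ @` _)).
by apply/seteqP; split => l [l0 hl]; split; rewrite // ?gh // -gh.
Qed.

Lemma rearr_normr f t : rearr (fun x => `|f x|%R) t = rearr f t.
Proof.
apply: erearr_eq_edistrib => l _; rewrite /edistrib; congr (leb (_ `&` _)).
by apply/funext => x /=; rewrite normr_id.
Qed.

Lemma rearr_le_bound f (c t : R) : (0 <= c)%R -> (0 <= t)%R ->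
  (forall x, `|f x| <= c)%R -> rearr f t <= c%:E.
Proof.
move=> c0 t0 fc; apply: erearr_le => //; apply: le_trans (_ : leb set0 <= _).
  by apply: le_leb => x [_ /=]; rewrite lte_fin ltNge fc.
by rewrite /leb measure0 lee_fin.
Qed.

Lemma in_Linf_ae f : in_Linf f ->
  {ae leb, forall x, U01 x -> (`|f x| <= fine (Linf_norm f))%R}.
Proof.
move=> [mf Lf]; have Lfin : Linf_norm f \is a fin_num by rewrite ge0_fin_numE ?erearr_ge0.
exists (U01 `&` [set x | (fine (Linf_norm f))%:E < `|(f x)%:E|]); split.
- exact: measurable_normr_gt.
- by apply/eqP; rewrite eq_le leb_ge0 andbT; exact: edistrib_rearr_le.
- move=> x /= /not_implyP[Ux] /negP; rewrite -ltNge => fx.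
  by split => //; rewrite lte_fin.
Qed.

Lemma measurable_clamp f (c : R) : measurable_fun U01 f ->
  measurable_fun U01 (fun x => clamp c (f x)).
Proof.
move=> mf; apply: measurable_maxr; first exact: measurable_cst.
by apply: measurable_minr => //; exact: measurable_cst.
Qed.

Lemma rearr_sub_clamp_le f (c t : R) : (0 <= c)%R ->
  rearr (fun x => f x - clamp c (f x))%R t <= rearr f t.
Proof.
move=> c0; rewrite -[leRHS]add0e; apply: erearr_le_ae => //.
by apply: aeW => x _ /=; rewrite add0e lee_fin normr_sub_clamp_le.
Qed.

Lemma edistrib_sub_clamp_le f (c : R) :
  edistrib (EFin \o (fun x => f x - clamp c (f x))%R) 0 <= edistrib (EFin \o f) c.
Proof.
apply: le_leb => x [Ux /=]; rewrite !lte_fin => fx; split => //=.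
by rewrite ltNge; apply: contraTN fx => /sub_clamp_eq0 ->; rewrite normr0 ltxx.
Qed.

Lemma measurable_nonincreasing (D : set R) (u : R -> R) : measurable D -> is_interval D ->
  (forall x y, D x -> D y -> (x <= y)%R -> (u y <= u x)%R) -> measurable_fun D u.
Proof.
move=> mD iD uD.
apply: (measurability (@RGenCInfty.G R)) => [|/= _ [_] [r] -> <-].
  exact: RGenCInfty.measurableE.
apply: is_interval_measurable => x y [Dx ux] [Dy uy] z /andP[xz zy].
have Dz : D z by apply: (iD x y) => //; rewrite xz zy.
split => //; move: uy; rewrite /= !in_itv /= !andbT => uy.
exact: le_trans uy (uD _ _ Dz Dy zy).
Qed.

Lemma measurable_fine_erearr g (D : set R) : measurable D -> is_interval D ->
  (forall s, D s -> erearr g s \is a fin_num) -> measurable_fun D (fun s => fine (erearr g s)).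
Proof.
move=> mD iD gfin; apply: measurable_nonincreasing => // x y Dx Dy xy.
by apply: fine_le; rewrite ?gfin //; exact: erearr_nonincreasing.
Qed.

Lemma measurable_erearr g (D : set R) : measurable D -> is_interval D ->
  (forall s, D s -> erearr g s \is a fin_num) -> measurable_fun D (erearr g).
Proof.
move=> mD iD gfin.
apply: (eq_measurable_fun (EFin \o (fun s => fine (erearr g s)))); last first.
  by apply/measurable_EFinP; exact: measurable_fine_erearr.
by move=> s; rewrite inE => Ds /=; rewrite fineK ?gfin.
Qed.

Lemma edistrib_rearr f (l : R) : measurable_fun U01 f ->
  (forall s, U01 s -> rearr f s \is a fin_num) -> (0 <= l)%R ->
  edistrib (EFin \o (fine \o rearr f)) l = edistrib (EFin \o f) l.
Proof.
move=> mf ffin l0; set mu := edistrib (EFin \o f) l.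
have mufin : mu \is a fin_num.
  by rewrite ge0_fin_numE ?leb_ge0 // (le_lt_trans (edistrib_le1 _ _)) ?ltry.
have a0 : (0 <= fine mu)%R by rewrite fine_ge0 ?leb_ge0.
have a1 : (fine mu <= 1)%R by rewrite -lee_fin fineK // edistrib_le1.
have level s : U01 s -> (l < fine (rearr f s))%R = (s < fine mu)%R.
  move=> Us; apply/idP/idP => h; rewrite ltNge; apply: contraTN h; rewrite -leNgt.
    move=> as_; rewrite -lee_fin fineK ?ffin //.
    by apply: erearr_le => //; rewrite -/mu -(fineK mufin) lee_fin.
  move=> Fl; rewrite -lee_fin fineK //.
  apply: (le_trans _ (edistrib_rearr_le _ _ mf (ffin s Us))); exact: edistrib_nonincreasing.
rewrite -[RHS]/mu -(fineK mufin) -(@leb_Ioo0 _ a0); congr leb.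
apply/seteqP; split => x /=.
  move=> [Ux]; rewrite lte_fin ger0_norm ?fine_ge0 ?erearr_ge0 // level //.
  by move/U01P: Ux => /andP[x0 _]; rewrite /Ioo0 /= in_itv /= x0.
move=> Ix; have Ux := Ioo0_U01 a1 Ix; move: Ix; rewrite /Ioo0 /= in_itv /= => /andP[_ xa].
by split => //; rewrite lte_fin ger0_norm ?fine_ge0 ?erearr_ge0 // level.
Qed.

Lemma rearr_rearr f t : measurable_fun U01 f -> (forall s, U01 s -> rearr f s \is a fin_num) ->
  rearr (fine \o rearr f) t = rearr f t.
Proof. by move=> mf ffin; apply: erearr_eq_edistrib => l; exact: edistrib_rearr. Qed.

End Rearrangement.

Section RISpace.
Context {R : realType} (X : ri_space R).
Implicit Types (f : R -> R).
Local Notation U01 := (@U01 R).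
Local Open Scope ereal_scope.

Lemma in_X_Linf f : in_Linf f -> in_X X f.
Proof.
move=> fL; split; first exact: fL.1.
set l := fine (Linf_norm f); have l0 : (0 <= l)%R by rewrite fine_ge0 ?erearr_ge0.
have mnf : measurable_fun U01 (fun x => `|f x|%R).
  by apply: measurableT_comp => //; exact: fL.1.
have m1 : measurable_fun U01 (\1_U01 : R -> R) by exact: measurable_indic measurable_U01.
have ml1 : measurable_fun U01 (fun x => l * \1_U01 x)%R.
  by apply: measurable_funM => //; exact: measurable_cst.
have indic_ge0 : nonneg01 (\1_U01 : R -> R) by move=> x _; rewrite indicE ler0n.
rewrite /normX; apply: le_lt_trans (rho_mono X ml1 _ mnf _ _) _.
- by move=> x Ux; rewrite mulr_ge0 ?indic_ge0.
- by move=> x _; exact: normr_ge0.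
- apply: (@filterS _ _ (ae_filter_ringOfSetsType (@lebesgue_measure R)) _ _ _
    (in_Linf_ae _ fL)).
  by move=> x fx Ux; rewrite indicE mem_set // mulr1; exact: fx.
rewrite rhoZ //; have : rho X (\1_U01) < +oo by exact: rho_indic measurable_U01 _.
by rewrite -ge0_fin_numE ?rho_ge0 // => /fineK <-; rewrite -EFinM ltry.
Qed.

Lemma normX_rearr f : measurable_fun U01 f -> (forall s, U01 s -> rearr f s \is a fin_num) ->
  normX X f = rho X (fun s => fine (rearr f s)).
Proof.
move=> mf ffin; apply: rho_ri.
- by apply: measurableT_comp => //; exact: normr_measurable.
- by move=> x _; exact: normr_ge0.
- apply: measurable_fine_erearr measurable_U01 _ ffin; exact: interval_is_interval.
- by move=> x _; rewrite fine_ge0 ?erearr_ge0.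
- by move=> t; rewrite rearr_normr rearr_rearr.
Qed.

End RISpace.

Section MarcinkiewiczSpace.
Context {R : realType} {I : R -> R}.
Hypothesis HI : incr_bij01 I.
Implicit Types (f : R -> R) (s t : R).
Local Notation U01 := (@U01 R).
Local Notation leb := (@leb R).

Lemma I_gt0 t : U01 t -> 0 < I t.
Proof. by move=> /HI.1 /U01P /andP[]. Qed.

Lemma I_le1 t : U01 t -> I t <= 1.
Proof. by move=> /HI.1 /U01P /andP[_ /ltW]. Qed.

Lemma I_le s t : U01 s -> U01 t -> s <= t -> I s <= I t.
Proof.
move=> Us Ut; rewrite le_eqVlt => /orP[/eqP -> //|st].
exact/ltW/HI.2.1.
Qed.

Local Open Scope ereal_scope.

Definition supI f t : \bar R := ereal_sup [set (I s)%:E * rearr f s | s in Ioc0 t].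

Lemma SIE f t : SI I f t = ((I t)^-1)%:E * supI f t.
Proof. by []. Qed.

Lemma Ioc0_U01 {s t} : (t < 1)%R -> Ioc0 t s -> U01 s.
Proof.
move=> t1; rewrite /Ioc0 /= in_itv /= => /andP[s0 st].
by apply/U01P; rewrite s0 (le_lt_trans st).
Qed.

Lemma rearr_le_mI_norm f t : U01 t -> (I t)%:E * rearr f t <= mI_norm I f.
Proof. by move=> Ut; apply: ereal_sup_ubound; exists t. Qed.

Lemma rearr_fin_num f t : in_mI I f -> U01 t -> rearr f t \is a fin_num.
Proof.
move=> [_ fI] Ut; rewrite ge0_fin_numE ?erearr_ge0 //.
have := le_lt_trans (rearr_le_mI_norm f _ Ut) fI.
by apply: contraTT; rewrite -leNgt leye_eq => /eqP ->; rewrite gt0_muley ?lte_fin ?I_gt0.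
Qed.

Lemma supI_ge f t : U01 t -> (I t)%:E * rearr f t <= supI f t.
Proof.
move=> /U01P /andP[t0 _]; apply: ereal_sup_ubound; exists t => //.
by rewrite /Ioc0 /= in_itv /= t0 lexx.
Qed.

Lemma supI_ge0 f t : U01 t -> 0 <= supI f t.
Proof.
move=> Ut; apply: le_trans (supI_ge f _ Ut).
by rewrite mule_ge0 ?erearr_ge0 // lee_fin ltW ?I_gt0.
Qed.

Lemma supI_le_mI_norm f t : (t < 1)%R -> supI f t <= mI_norm I f.
Proof.
by move=> t1; apply: ereal_sup_le => _ [s Hs <-]; exists s => //; exact: Ioc0_U01 Hs.
Qed.

Lemma supI_fin_num f t : in_mI I f -> U01 t -> supI f t \is a fin_num.
Proof.
move=> fI Ut; move/U01P: (Ut) => /andP[_ t1].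
by rewrite ge0_fin_numE ?supI_ge0 // (le_lt_trans (supI_le_mI_norm f _ t1) fI.2).
Qed.

Lemma le_supI f s t : (s <= t)%R -> supI f s <= supI f t.
Proof.
move=> st; apply: ereal_sup_le => _ [u Hu <-]; exists u => //.
by move: Hu; rewrite /Ioc0 /= !in_itv /= => /andP[-> /le_trans ->].
Qed.

Lemma supI_le_split f r t : U01 r -> U01 t ->
  supI f r <= supI f t + (I r)%:E * rearr f t.
Proof.
move=> Ur Ut; apply: ge_ereal_sup => _ [u Hu <-].
have Uu : U01 u by move/U01P: Ur => /andP[_ r1]; exact: Ioc0_U01 r1 Hu.
have [ut|tu] := leP u t.
  apply: lee_paddr; first by rewrite mule_ge0 ?erearr_ge0 // lee_fin ltW ?I_gt0.
  exact: le_trans (supI_ge f _ Uu) (le_supI f _ _ ut).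
apply: lee_paddl; first exact: supI_ge0.
apply: le_trans (lee_wpmul2l _ (erearr_nonincreasing _ (ltW tu))) _.
  by rewrite lee_fin ltW ?I_gt0.
apply: lee_wpmul2r; first exact: erearr_ge0.
by rewrite lee_fin I_le //; move: Hu; rewrite /Ioc0 /= in_itv /= => /andP[].
Qed.

Lemma rearr_le_SI f t : U01 t -> rearr f t <= SI I f t.
Proof. by move=> Ut; rewrite SIE lee_pdivlMl ?I_gt0 //; exact: supI_ge. Qed.

Lemma SI_ge0 f t : U01 t -> 0 <= SI I f t.
Proof. by move=> Ut; rewrite SIE mule_ge0 ?supI_ge0 // lee_fin invr_ge0 ltW ?I_gt0. Qed.

Lemma SI_fin_num f t : in_mI I f -> U01 t -> SI I f t \is a fin_num.
Proof. by move=> fI Ut; rewrite SIE fin_numM ?supI_fin_num. Qed.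

Lemma in_mI_bounded f (c : R) : measurable_fun U01 f -> (0 <= c)%R ->
  (forall x, `|f x| <= c)%R -> in_mI I f.
Proof.
move=> mf c0 fc; split => //; apply: (@le_lt_trans _ _ c%:E); last exact: ltry.
apply: ge_ereal_sup => _ [s Us <-]; move/U01P: (Us) => /andP[s0 _].
apply: le_trans (lee_wpmul2l _ (rearr_le_bound _ _ _ c0 (ltW s0) fc)) _.
  by rewrite lee_fin ltW ?I_gt0.
by rewrite -EFinM lee_fin ler_piMl ?I_le1.
Qed.

Lemma mI_norm_le_supI f g t : U01 t -> (forall s, rearr g s <= rearr f s) ->
  edistrib (EFin \o g) 0 <= t%:E -> mI_norm I g <= supI f t.
Proof.
move=> Ut gf gt; apply: ge_ereal_sup => _ [s Us <-].
have Is0 : 0 <= (I s)%:E by rewrite lee_fin ltW ?I_gt0.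
have [st|ts] := leP s t.
  apply: le_trans (le_supI f _ _ st); apply: le_trans (supI_ge f _ Us).
  exact: lee_wpmul2l.
have gs0 : rearr g s = 0.
  apply/eqP; rewrite eq_le erearr_ge0 andbT; apply: erearr_le => //.
  by apply: le_trans gt _; rewrite lee_fin ltW.
by rewrite gs0 mule0 supI_ge0.
Qed.

Lemma rearr_sublinearD_le S f1 f2 t : sublinear_on_mI I S ->
  in_mI I f1 -> in_mI I f2 -> in_Linf (S f1) ->
  rearr (S (fun x => f1 x + f2 x)%R) t <= Linf_norm (S f1) + rearr (S f2) t.
Proof.
move=> [_ [SD _]] f1I f2I Sf1.
have Lfin : Linf_norm (S f1) \is a fin_num by rewrite ge0_fin_numE ?erearr_ge0 ?Sf1.2.
rewrite -(fineK Lfin); apply: erearr_le_ae; first by rewrite fine_ge0 ?erearr_ge0.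
apply: (filterS2 (ae_filter_ringOfSetsType (@lebesgue_measure R)) _
  (SD _ _ f1I f2I) (in_Linf_ae _ Sf1)) => x Sx Lx Ux /=.
rewrite -EFinD lee_fin.
by apply: le_trans (Sx Ux) _; rewrite lerD2r Lx.
Qed.

Lemma rearr_sublinear_le_SI S : sublinear_on_mI I S -> bounded_Linf S -> bounded_mI I S ->
  exists C : R, (0 < C)%R /\
    forall f, in_mI I f -> forall t, U01 t -> rearr (S f) t <= C%:E * SI I f t.
Proof.
move=> subS [C1 [C10 SL]] [C2 [C20 SM]]; exists (C1 + C2)%R; split; first exact: addr_gt0.
move=> f fI t Ut; have [mf _] := fI; have /U01P/andP[_ t1] := Ut.
have ffin := rearr_fin_num f _ fI Ut.
set c := fine (rearr f t); have c0 : (0 <= c)%R by rewrite fine_ge0 ?erearr_ge0.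
pose f1 x := clamp c (f x); pose f2 x := (f x - f1 x)%R.
have f1c x : (`|f1 x| <= c)%R by exact: normr_clamp_le.
have f1Lc : Linf_norm f1 <= c%:E := rearr_le_bound _ _ 0 c0 (lexx _) f1c.
have f1L : in_Linf f1 by split; [exact: measurable_clamp|exact: le_lt_trans f1Lc (ltry _)].
have f1I : in_mI I f1 by apply: in_mI_bounded c0 f1c; exact: measurable_clamp.
have f2M : mI_norm I f2 <= supI f t.
  apply: (mI_norm_le_supI f f2 t Ut (fun s => rearr_sub_clamp_le f c s c0)).
  exact: le_trans (edistrib_sub_clamp_le f c) (edistrib_rearr_le _ _ mf ffin).
have f2I : in_mI I f2.
  split; first by apply: measurable_funB => //; exact: measurable_clamp.
  by apply: le_lt_trans f2M (le_lt_trans (supI_le_mI_norm f _ t1) fI.2).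
have [[Sf1L Sf1c] [_ Sf2M]] := (SL f1 f1L, SM f2 f2I).
have -> : S f = S (fun x => f1 x + f2 x)%R by congr S; apply/funext => x; rewrite addrC subrK.
apply: le_trans (rearr_sublinearD_le _ _ _ t subS f1I f2I Sf1L) _.
rewrite EFinD ge0_muleDl ?lee_fin ?(ltW C10) ?(ltW C20) //; apply: leeD.
  apply: le_trans Sf1c _; apply: lee_wpmul2l; first by rewrite lee_fin ltW.
  by apply: le_trans f1Lc _; rewrite /c fineK ?rearr_le_SI.
rewrite SIE muleCA lee_pdivlMl ?I_gt0 //.
apply: le_trans (rearr_le_mI_norm _ _ Ut) (le_trans Sf2M _).
by apply: lee_wpmul2l f2M; rewrite lee_fin ltW.
Qed.

Lemma measurable_invI t : (t <= 1)%R -> measurable_fun (Ioo0 t) (fun s => ((I s)^-1)%:E).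
Proof.
move=> t1; apply/measurable_EFinP; apply: measurable_nonincreasing.
- exact: measurable_Ioo0.
- exact: interval_is_interval.
- move=> x y /(Ioo0_U01 t1) Ux /(Ioo0_U01 t1) Uy xy.
  by rewrite lef_pV2 ?posrE ?I_gt0 // I_le.
Qed.

Lemma erearr2_le_bound g t (b k C3 : R) : U01 t -> (0 <= b)%R -> (0 <= k)%R ->
  \int[leb]_(s in Ioo0 t) ((I s)^-1)%:E <= (C3 * t / I t)%:E ->
  (forall s, Ioo0 t s -> erearr g s <= (b + k / I s)%:E) ->
  erearr2 g t <= (b + k * C3 / I t)%:E.
Proof.
move=> Ut b0 k0 intI gb; have /U01P/andP[t0 t1] := Ut.
have invI0 s : Ioo0 t s -> 0 <= ((I s)^-1)%:E.
  by move=> /(Ioo0_U01 (ltW t1)) Us; rewrite lee_fin invr_ge0 ltW ?I_gt0.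
have gfin s : Ioo0 t s -> erearr g s \is a fin_num.
  by move=> Ds; rewrite ge0_fin_numE ?erearr_ge0 // (le_lt_trans (gb s Ds)) ?ltry.
have iD : is_interval (Ioo0 t) by exact: interval_is_interval.
have mg := measurable_erearr g _ (measurable_Ioo0 t) iD gfin.
have mI' := measurable_invI t (ltW t1).
have int_le : \int[leb]_(s in Ioo0 t) erearr g s <= (b * t + k * (C3 * t / I t))%:E.
  apply: le_trans.
    apply: (@ge0_le_integral _ _ _ (@lebesgue_measure R) _ (measurable_Ioo0 t) _
      (fun s => b%:E + k%:E * ((I s)^-1)%:E) (fun s _ => erearr_ge0 g s) mg).
    - by apply: emeasurable_funD; [exact: measurable_cst|exact: measurable_funeM].
    - by move=> s Ds; rewrite -EFinM -EFinD; exact: gb.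
  rewrite (ge0_integralD (@lebesgue_measure R) (measurable_Ioo0 t)); last 4 first.
  - by move=> s _; rewrite lee_fin.
  - exact: measurable_cst.
  - by move=> s Ds; rewrite mule_ge0 ?invI0.
  - exact: measurable_funeM.
  rewrite (ge0_integralZl (@lebesgue_measure R) (measurable_Ioo0 t) mI') //.
  rewrite (integral_cst (@lebesgue_measure R) (measurable_Ioo0 t)).
  rewrite [X in b%:E * X](_ : _ = t%:E); last exact: leb_Ioo0 (ltW t0).
  by rewrite EFinD EFinM leeD2l // EFinM lee_wpmul2l.
rewrite /erearr2; apply: le_trans (lee_wpmul2l _ int_le) _.
  by rewrite lee_fin invr_ge0 ltW.
rewrite -EFinM lee_fin le_eqVlt; apply/orP; left; apply/eqP.
by field; apply/andP; split; rewrite lt0r_neq0 ?I_gt0.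
Qed.

Lemma erearr2_le_SI g f (C C3 t : R) : (0 <= C)%R -> in_mI I f -> U01 t ->
  \int[leb]_(s in Ioo0 t) ((I s)^-1)%:E <= (C3 * t / I t)%:E ->
  (forall s, U01 s -> erearr g s <= C%:E * SI I f s) ->
  erearr2 g t <= (C * C3)%:E * SI I f t.
Proof.
move=> C0 fI Ut intI gSI; have /U01P/andP[_ t1] := Ut.
have mE := fineK (supI_fin_num f t fI Ut); set m := fine (supI f t) in mE.
have m0 : (0 <= m)%R by rewrite -lee_fin mE supI_ge0.
apply: le_trans (erearr2_le_bound g t 0 (C * m) C3 Ut (lexx _) (mulr_ge0 C0 m0) intI _) _.
  move=> s Ds; have Us := Ioo0_U01 (ltW t1) Ds; apply: le_trans (gSI s Us) _.
  rewrite SIE add0r -mulrA EFinM; apply: lee_wpmul2l; first by rewrite lee_fin.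
  rewrite mulrC EFinM; apply: lee_wpmul2l; first by rewrite lee_fin invr_ge0 ltW ?I_gt0.
  by rewrite mE le_supI //; move: Ds; rewrite /Ioo0 /= in_itv /= => /andP[_ /ltW].
rewrite SIE -mE -!EFinM lee_fin add0r le_eqVlt; apply/orP; left; apply/eqP.
by field; rewrite lt0r_neq0 ?I_gt0.
Qed.

Lemma SI_le_split f r t : U01 r -> U01 t ->
  SI I f r <= SI I f t + ((I r)^-1)%:E * supI f t.
Proof.
move=> Ur Ut; have Ir0 := I_gt0 r Ur.
rewrite SIE addeC; apply: le_trans (lee_wpmul2l _ (supI_le_split f r t Ur Ut)) _.
  by rewrite lee_fin invr_ge0 ltW.
rewrite ge0_muleDr ?supI_ge0 ?mule_ge0 ?erearr_ge0 ?lee_fin ?(ltW Ir0) //.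
rewrite muleA -EFinM mulVf ?lt0r_neq0 // mul1e; apply: leeD2l; exact: rearr_le_SI.
Qed.

Lemma erearr_invI_le (k s : R) : (0 <= k)%R -> U01 s ->
  erearr (fun r => (k / I r)%:E) s <= (k / I s)%:E.
Proof.
move=> k0 Us; have /U01P/andP[s0 _] := Us.
apply: erearr_le; first exact: divr_ge0 k0 (ltW (I_gt0 s Us)).
rewrite -(leb_Ioo0 _ (ltW s0)); apply: le_leb => x [Ux /=].
rewrite lte_fin ger0_norm ?(divr_ge0 k0 (ltW (I_gt0 x Ux))) // => ksx.
have /U01P/andP[x0 _] := Ux; rewrite /Ioo0 /= in_itv /= x0 ltNge /=.
apply: contraTN ksx => sx; rewrite -leNgt ler_wpM2l // lef_pV2 ?posrE ?I_gt0 //.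
exact: I_le.
Qed.

Lemma erearr2_SI_le_SI f (C3 t : R) : in_mI I f -> U01 t ->
  \int[leb]_(s in Ioo0 t) ((I s)^-1)%:E <= (C3 * t / I t)%:E ->
  erearr2 (SI I f) t <= (1 + C3)%:E * SI I f t.
Proof.
move=> fI Ut intI; have /U01P/andP[_ t1] := Ut.
have mE := fineK (supI_fin_num f t fI Ut); set m := fine (supI f t) in mE.
have m0 : (0 <= m)%R by rewrite -lee_fin mE supI_ge0.
have sE := fineK (SI_fin_num f t fI Ut); set sI := fine (SI I f t) in sE.
have sI0 : (0 <= sI)%R by rewrite -lee_fin sE SI_ge0.
apply: le_trans (erearr2_le_bound _ t sI m C3 Ut sI0 m0 intI _) _.
  move=> s Ds; have Us := Ioo0_U01 (ltW t1) Ds; rewrite EFinD.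
  apply: le_trans (erearr_le_ae _ (fun r => (m / I r)%:E) sI s sI0 _) _.
    apply: aeW => r Ur; have Ir0 := I_gt0 r Ur.
    rewrite gee0_abs ?SI_ge0 // gee0_abs ?lee_fin ?divr_ge0 ?(ltW Ir0) //.
    by rewrite sE mulrC EFinM mE; exact: SI_le_split.
  by rewrite leeD2l //; exact: erearr_invI_le.
rewrite -sE -EFinM lee_fin le_eqVlt; apply/orP; left; apply/eqP.
have -> : sI = (m / I t)%R by rewrite /sI SIE -mE -EFinM /= mulrC.
by field; rewrite lt0r_neq0 ?I_gt0.
Qed.

Lemma sublinear_on_mI_linear T : linear_on_mI I T -> sublinear_on_mI I T.
Proof.
move=> [mT Tlin]; split => //; split.
- move=> f g fI gI; move: (Tlin 1%R 1%R f g fI gI).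
  under [X in T X]eq_fun do rewrite !mul1r.
  apply: (@filterS _ _ (ae_filter_ringOfSetsType (@lebesgue_measure R))) => x Tx Ux.
  by rewrite Tx // !mul1r; exact: ler_normD.
- move=> a f fI; move: (Tlin a 0%R f f fI fI).
  under [X in T X]eq_fun do rewrite mul0r addr0.
  apply: (@filterS _ _ (ae_filter_ringOfSetsType (@lebesgue_measure R))) => x Tx Ux.
  by rewrite Tx // mul0r addr0 normrM.
Qed.

Lemma normX_le_SI (X : ri_space R) g f (C : R) : (0 < C)%R -> in_mI I g -> in_mI I f ->
  measurable_fun U01 (fun t => fine (SI I f t)) ->
  (forall t, U01 t -> rearr g t <= C%:E * SI I f t) ->
  normX X g <= C%:E * normX X (fun t => fine (SI I f t)).
Proof.
move=> C0 gI fI mSI gSI; have gfin s := rearr_fin_num g s gI.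
have mnSI : measurable_fun U01 (fun t => `|fine (SI I f t)|%R).
  by apply: measurableT_comp => //; exact: normr_measurable.
rewrite (normX_rearr X g gI.1 gfin).
rewrite [Y in _ <= Y](_ : _ = rho X (fun t => C * `|fine (SI I f t)|)%R); last first.
  exact: (esym (rhoZ X (ltW C0) mnSI (fun t _ => normr_ge0 _))).
apply: rho_mono.
- by apply: measurable_funM => //; exact: measurable_cst.
- by move=> x _; rewrite mulr_ge0 ?(ltW C0).
- by apply: measurable_fine_erearr measurable_U01 _ gfin; exact: interval_is_interval.
- by move=> x _; rewrite fine_ge0 ?erearr_ge0.
apply: aeW => x Ux; rewrite -lee_fin fineK ?gfin // EFinM.
apply: le_trans (gSI x Ux) _; rewrite -(fineK (SI_fin_num f x fI Ux)).
by apply: lee_wpmul2l; rewrite lee_fin ?(ltW C0) // ler_norm.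
Qed.

Lemma Int_Linf_mI_of_SI_bounded (X : ri_space R) : (forall f, in_X X f -> in_mI I f) ->
  SI_bounded_X I X -> Int_Linf_mI I X.
Proof.
move=> XmI [CS [CS0 SIX]]; split; first exact: in_X_Linf.
split=> // T Tlin TL TM; have [CT [_ TMb]] := TM.
have [C [C0 TSI]] := rearr_sublinear_le_SI T (sublinear_on_mI_linear T Tlin) TL TM.
exists (C * CS)%R; split; first exact: mulr_gt0.
move=> f fX; have fI := XmI f fX; have [TfI _] := TMb f fI.
have [[mSI _] SIf] := SIX f fX.
have TfX : normX X (T f) <= (C * CS)%:E * normX X f.
  apply: le_trans (normX_le_SI X (T f) f C C0 TfI fI mSI (TSI f fI)) _.
  by rewrite EFinM -muleA lee_wpmul2l // lee_fin ltW.
have fXfin : normX X f \is a fin_num by rewrite ge0_fin_numE ?rho_ge0 ?fX.2.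
split=> //; split; first exact: TfI.1.
by apply: le_lt_trans TfX _; rewrite -(fineK fXfin) -EFinM ltry.
Qed.

End MarcinkiewiczSpace.

Theorem theorem3p9 (R : realType) (I : R -> R) (S : (R -> R) -> (R -> R)) :
  incr_bij01 I -> doubling I ->
  sublinear_on_mI I S -> bounded_Linf S -> bounded_mI I S ->
  (exists C : R, 0 < C /\ forall f, in_mI I f -> nonneg01 f ->
     forall t, U01 t -> (rearr (S f) t <= C%:E * SI I f t)%E) /\
  (int_cond I ->
   exists C : R, 0 < C /\ forall f, in_mI I f -> nonneg01 f ->
     forall t, U01 t ->
       (rearr2 (S f) t <= C%:E * SI I f t)%E /\
       (erearr2 (SI I f) t <= C%:E * SI I f t)%E) /\
  (forall X : ri_space R, (forall f, in_X X f -> in_mI I f) ->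
     SI_bounded_X I X -> Int_Linf_mI I X).
Proof.
move=> HI _ subS SL SM.
have [C [C0 SSI]] := rearr_sublinear_le_SI HI S subS SL SM.
split; first by exists C; split=> // f fI _; exact: SSI.
split; last exact: Int_Linf_mI_of_SI_bounded HI.
move=> [C3 [C30 intI]]; exists (C * C3 + (1 + C3)); split.
  by rewrite addr_gt0 ?mulr_gt0 ?addr_gt0.
move=> f fI _ t Ut; have SI0 := SI_ge0 HI f t Ut.
split.
- apply: le_trans (erearr2_le_SI HI _ f C C3 t (ltW C0) fI Ut (intI t Ut) (SSI f fI)) _.
  by rewrite lee_wpmul2r // lee_fin lerDl addr_ge0 ?ltW.
- apply: le_trans (erearr2_SI_le_SI HI f C3 t fI Ut (intI t Ut)) _.
  by rewrite lee_wpmul2r // lee_fin lerDr mulr_ge0 ?ltW.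
Qed.
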